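(* Let $n\ge2$, fix a lattice $\mathbb{Z}+\mathbb{Z}\tau$ ($\operatorname{Im}\tau>0$) with Weierstrass function $\wp$, and fix $\lambda_1,\dots,\lambda_n\in\mathbb{C}$ with $\lambda_i-\lambda_j\notin\mathbb{Z}+\mathbb{Z}\tau$ for $i\ne j$. In the algebra $\mathcal{A}$ described in the context, the Dunkl elements $\theta_i=\sum_{j\ne i}[ij]$, $i=1,\dots,n$, commute pairwise.
   Context: Write $x_1,\dots,x_n$ for the coordinates on $\mathbb{C}^n$, $x_{ij}=x_i-x_j$, $\lambda_{ij}=\lambda_i-\lambda_j$, and let $\mathcal{M}$ be the field of meromorphic functions on $\mathbb{C}^n$; for $i\ne j$ let $s_{ij}$ act on $\mathcal{M}$ by $(s_{ij}f)(x)=f(x')$ where $x'$ is $x$ with coordinates $x_i,x_j$ interchanged. The algebra $\mathcal{A}$ is the $\mathbb{C}$-algebra generated by $\mathcal{M}$ and symbols $[ij]$, $1\le i\ne j\le n$, with $[ji]=-[ij]$, subject to: (i) $[ij]^2=\wp(\lambda_{ij})-\wp(x_{ij})$; (ii) $[ij][kl]=[kl][ij]$ if $\{i,j\}\cap\{k,l\}=\emptyset$; (iii) $[ij][jk]+[jk][ki]+[ki][ij]=0$ for distinct $i,j,k$; (iv) $[ij]f=(s_{ij}f)[ij]$ for $f\in\mathcal{M}$. *)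

From HB Require Import structures.
From mathcomp Require Import all_boot all_order all_algebra.
From mathcomp Require Import all_classical all_reals all_analysis.
From mathcomp Require Import complex.
Set Implicit Arguments. Unset Strict Implicit. Unset Printing Implicit Defensive.
Import Order.TTheory GRing.Theory Num.Theory.
Import numFieldTopology.Exports numFieldNormedType.Exports.
Local Open Scope classical_set_scope.
Local Open Scope ring_scope.

(* The complex numbers, packaged as a numClosedFieldType so that the
   analysis topology / normed-module structure over itself is found. *)
Definition CC (R : rcfType) : numClosedFieldType := R[i].

Section Defs.
Variable R : realType.
Local Notation C := (CC R).

Definition row_upd n (x : 'rV[C]_n) (k : 'I_n) (z : C) : 'rV[C]_n :=
  \row_l (if l == k then z else x 0 l).

(* holomorphic on an open set U of C^n: continuous and complex-differentiable
   in each variable separately (Osgood) *)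
Definition holomorphic_on n (U : set 'rV[C]_n) (f : 'rV[C]_n -> C) : Prop :=
  {within U, continuous f} /\
  forall a, U a -> forall k : 'I_n,
    derivable (fun z : C => f (row_upd a k z)) (a 0 k) 1.

(* meromorphic on C^n: locally a quotient g/h of holomorphic functions with h
   not identically zero (values of f on the zero set of h are irrelevant) *)
Definition meromorphic n (f : 'rV[C]_n -> C) : Prop :=
  forall p : 'rV[C]_n, exists e : C, 0 < e /\
    exists g h : 'rV[C]_n -> C,
      [/\ holomorphic_on (ball p e) g, holomorphic_on (ball p e) h,
          (exists x, ball p e x /\ h x != 0) &
          forall x, ball p e x -> h x != 0 -> f x = g x / h x].

(* equality in the field M of meromorphic functions (identity theorem):
   agreement on a nonempty open set *)
Definition mer_eq n (f g : 'rV[C]_n -> C) : Prop :=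
  exists U : set 'rV[C]_n, [/\ open U, U !=set0 & forall x, U x -> f x = g x].

Definition lattice_pt (tau : C) (a b : int) : C := a%:~R + b%:~R * tau.
Definition in_lattice (tau : C) (z : C) : Prop :=
  exists a b : int, z = lattice_pt tau a b.

(* Weierstrass p-function:
   wp z = z^-2 + sum_{w in lattice, w <> 0} ((z - w)^-2 - w^-2),
   the (absolutely convergent) sum taken as limit of square partial sums *)
Definition wp_partial (tau z : C) (N : nat) : C :=
  \sum_(a < (2 * N).+1) \sum_(b < (2 * N).+1)
     (if ((a : nat) == N) && ((b : nat) == N) then 0
      else let w := lattice_pt tau (a%:Z - N%:Z) (b%:Z - N%:Z) in
           (z - w) ^- 2 - w ^- 2).
Definition wp (tau z : C) : C := z ^- 2 + limn (wp_partial tau z).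

Definition swapc n (i j : 'I_n) (x : 'rV[C]_n) : 'rV[C]_n :=
  \row_k (if k == i then x 0 j else if k == j then x 0 i else x 0 k).

(* phi : M -> B is a ring homomorphism from the field of meromorphic functions
   (represented by functions C^n -> C, modulo mer_eq) *)
Definition mer_hom n (B : pzRingType) (phi : ('rV[C]_n -> C) -> B) : Prop :=
  [/\ forall f g, meromorphic f -> meromorphic g -> mer_eq f g -> phi f = phi g,
      forall f g, meromorphic f -> meromorphic g -> phi (f \+ g) = phi f + phi g,
      forall f g, meromorphic f -> meromorphic g -> phi (f \* g) = phi f * phi g &
      phi (fun _ => 1) = 1].

(* elements e i j = [ij] of B satisfying the defining relations of the
   algebra A (with [ji] = -[ij]) together with phi *)
Definition dunkl_rel n (tau : C) (lam : 'I_n -> C) (B : pzRingType)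
    (phi : ('rV[C]_n -> C) -> B) (e : 'I_n -> 'I_n -> B) : Prop :=
  [/\ forall i j, i != j -> e j i = - e i j,
      forall i j, i != j -> e i j * e i j =
        phi (fun x => wp tau (lam i - lam j) - wp tau (x 0 i - x 0 j)),
      (* (ii) *)
      forall i j k l, i != j -> k != l ->
        [&& i != k, i != l, j != k & j != l] -> e i j * e k l = e k l * e i j,
      (* (iii) *)
      forall i j k, i != j -> j != k -> k != i ->
        e i j * e j k + e j k * e k i + e k i * e i j = 0 &
      forall i j f, i != j -> meromorphic f ->
        e i j * phi f = phi (fun x => f (swapc i j x)) * e i j].

Definition dunkl n (B : pzRingType) (e : 'I_n -> 'I_n -> B) (i : 'I_n) : B :=
  \sum_(j < n | j != i) e i j.

End Defs.

From HB Require Import structures.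
From mathcomp Require Import all_boot all_order all_algebra ssrAC.
From mathcomp Require Import all_classical all_reals all_analysis.
From mathcomp Require Import complex.
Set Implicit Arguments.
Unset Strict Implicit.
Unset Printing Implicit Defensive.
Import Order.TTheory GRing.Theory Num.Theory.
Import numFieldTopology.Exports numFieldNormedType.Exports.
Local Open Scope ring_scope.

(* Only the antisymmetry of [ij], the locality relation (ii) and the
   three-term relation (iii) matter.  Splitting off [ik] from theta_i and
   [ki] = -[ik] from theta_k, the commutator [theta_i, theta_k] becomes a sum
   over m <> i, k of [[ik], [km]] + [[im], [ki]] + [[im], [km]], the other
   cross terms vanishing by (ii); each of these sums is the difference of the
   relations (iii) for the triangles (i, k, m) and (i, m, k). *)

Section Bracket.
Variable B : pzRingType.
Implicit Types x y z : B.

Definition bracket x y := x * y - y * x.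

Lemma bracketC x y : bracket y x = - bracket x y.
Proof. by rewrite /bracket opprB. Qed.

Lemma bracketNr x y : bracket x (- y) = - bracket x y.
Proof. by rewrite /bracket mulrN mulNr opprK opprB addrC. Qed.

Lemma bracketDl x y z : bracket (x + y) z = bracket x z + bracket y z.
Proof. by rewrite /bracket mulrDl mulrDr opprD addrACA. Qed.

Lemma bracketDr x y z : bracket x (y + z) = bracket x y + bracket x z.
Proof. by rewrite /bracket mulrDl mulrDr opprD addrACA. Qed.

Lemma bracket_suml (I : Type) (r : seq I) (P : pred I) (F : I -> B) y :
  bracket (\sum_(i <- r | P i) F i) y = \sum_(i <- r | P i) bracket (F i) y.
Proof. by rewrite /bracket mulr_suml mulr_sumr -sumrB. Qed.

Lemma bracket_sumr (I : Type) (r : seq I) (P : pred I) (F : I -> B) x :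
  bracket x (\sum_(i <- r | P i) F i) = \sum_(i <- r | P i) bracket x (F i).
Proof. by rewrite /bracket mulr_suml mulr_sumr -sumrB. Qed.

Lemma bracket_comm x y : x * y = y * x -> bracket x y = 0.
Proof. by rewrite /bracket => ->; rewrite subrr. Qed.

(* With x = [ik], y = [km], z = [im], the hypotheses are relation (iii) for
   the triangles (i, k, m) and (i, m, k), rewritten by antisymmetry. *)
Lemma bracket_cycle_sum x y z :
  x * y + y * (- z) + (- z) * x = 0 ->
  z * (- y) + (- y) * (- x) + (- x) * z = 0 ->
  bracket x y + bracket x z + bracket z y = 0.
Proof.
rewrite !mulrN !mulNr !opprK => Rikm /eqP.
rewrite -oppr_eq0 !opprD !opprK => /eqP Rimk.
by rewrite /bracket !addrA (ACl (1*6*4*5*2*3)) /= Rikm add0r.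
Qed.

End Bracket.

Section DunklCommute.
Variables (B : pzRingType) (n : nat) (e : 'I_n -> 'I_n -> B).
Hypothesis e_antisym : forall i j, i != j -> e j i = - e i j.
Hypothesis e_comm_disjoint : forall i j k l, i != j -> k != l ->
  [&& i != k, i != l, j != k & j != l] -> e i j * e k l = e k l * e i j.
Hypothesis e_cycle : forall i j k, i != j -> j != k -> k != i ->
  e i j * e j k + e j k * e k i + e k i * e i j = 0.

Lemma dunklD1 i k : k != i ->
  dunkl e i = e i k + \sum_(m < n | (m != i) && (m != k)) e i m.
Proof. by move=> ki; rewrite /dunkl (bigD1 k). Qed.

Lemma bracket_dunkl i k : bracket (dunkl e i) (dunkl e k) = 0.
Proof.
have [<-|ik] := eqVneq i k; first exact: bracket_comm.
have ki : k != i by rewrite eq_sym.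
set S := fun m : 'I_n => (m != i) && (m != k).
have dunkl_k : dunkl e k = - e i k + \sum_(m < n | S m) e k m.
  rewrite (dunklD1 ik) (e_antisym ik); congr (_ + _).
  by apply: eq_bigl => m; rewrite /S andbC.
have diagonal m : S m ->
    bracket (e i m) (\sum_(l < n | S l) e k l) = bracket (e i m) (e k m).
  case/andP=> mi mk.
  rewrite bracket_sumr (bigD1 m) /=; last by rewrite /S mi mk.
  rewrite big1 ?addr0 // => l /andP[/andP[li lk] lm]; apply: bracket_comm.
  apply: e_comm_disjoint; [by rewrite eq_sym | by rewrite eq_sym |].
  by rewrite ik mk (eq_sym m) lm (eq_sym i) li.
rewrite (dunklD1 ki) dunkl_k bracketDl !bracketDr bracketNr.
rewrite [bracket (e i k) (e i k)]bracket_comm // oppr0 add0r.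
rewrite !bracket_suml !bracket_sumr (eq_bigr _ diagonal) -!big_split /=.
apply: big1 => m /andP[mi mk]; rewrite bracketNr -bracketC addrA.
have im : i != m by rewrite eq_sym.
have km : k != m by rewrite eq_sym.
apply: bracket_cycle_sum.
  by rewrite -(e_antisym im); exact: e_cycle ik km mi.
by rewrite -(e_antisym km) -(e_antisym ik); exact: e_cycle im mk ki.
Qed.

Lemma dunkl_comm i k : dunkl e i * dunkl e k = dunkl e k * dunkl e i.
Proof. by apply/eqP; rewrite -subr_eq0; apply/eqP/bracket_dunkl. Qed.

End DunklCommute.

Theorem proposition3p1 (R : realType) (n : nat) (tau : CC R)
    (lam : 'I_n -> CC R) :
  (2 <= n)%N -> 0 < 'Im tau ->
  (forall i j : 'I_n, i != j -> ~ in_lattice tau (lam i - lam j)) ->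
  forall (B : pzRingType) (phi : ('rV[CC R]_n -> CC R) -> B)
         (e : 'I_n -> 'I_n -> B),
    mer_hom phi -> dunkl_rel tau lam phi e ->
    forall i k : 'I_n, dunkl e i * dunkl e k = dunkl e k * dunkl e i.
Proof.
move=> _ _ _ B phi e _ [e_antisym _ e_comm_disjoint e_cycle _].
exact: dunkl_comm.
Qed.
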